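(* There exists a random coverage collaborative learning problem with strategy space $\Theta=\mathbb{R}_+^k$ whose set of stable equilibria is non-convex.
   Context: Random coverage: finite domain $\mathcal{X}$; agent $i$ has a distribution $(q_{ix})_{x\in\mathcal{X}}$ on $\mathcal{X}$. For integer sample counts ${\bf m}$, $U_i({\bf m})=1-\frac12\sum_{x\in\mathcal{X}}q_{ix}\prod_{j=1}^k(1-q_{jx})^{m_j}$; for real ${\boldsymbol\theta}\in\mathbb{R}_+^k$, $u_i({\boldsymbol\theta})=\mathbb{E}[U_i({\bf m})]$ where the $m_j$ are independent with $m_j=\lfloor\theta_j\rfloor+\mathrm{Bernoulli}(\theta_j-\lfloor\theta_j\rfloor)$. Each agent has a threshold $\mu_i$; ${\boldsymbol\theta}$ is feasible if $u_i({\boldsymbol\theta})\ge\mu_i$ for all $i$. A feasible ${\boldsymbol\theta}$ is a stable equilibrium if for no $i$ is there $0\le\theta_i'<\theta_i$ with $u_i(\theta_i',{\boldsymbol\theta}_{-i})\ge\mu_i$ (${\boldsymbol\theta}$ with $i$-th entry replaced by $\theta_i'$). *)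

From mathcomp Require Import all_boot all_order all_algebra.
From mathcomp Require Import Rstruct.
From Stdlib Require Import Reals.
Set Implicit Arguments. Unset Strict Implicit. Unset Printing Implicit Defensive.
Import Order.TTheory GRing.Theory Num.Theory.
Local Open Scope ring_scope.

Notation RR := Rdefinitions.R.

Section RandomCoverage.
Variables (X : finType) (k : nat) (q : 'I_k -> X -> RR).

Definition is_distr : Prop :=
  forall i : 'I_k, (forall x, 0 <= q i x) /\ \sum_(x : X) q i x = 1.

Definition Ucov (i : 'I_k) (m : 'I_k -> nat) : RR :=
  1 - 2^-1 * \sum_(x : X) q i x * \prod_(j < k) (1 - q j x) ^+ m j.

(* floor and fractional part (theta_j >= 0, so truncn = floor) *)
Definition fl (t : RR) : nat := Num.truncn t.
Definition frac (t : RR) : RR := t - (fl t)%:R.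

(* u_i(theta) = E[U_i(m)] with independent m_j = floor theta_j + Bernoulli(frac theta_j);
   the expectation is written out as the finite sum over outcomes b of the Bernoullis. *)
Definition ucov (i : 'I_k) (theta : 'I_k -> RR) : RR :=
  \sum_(b : {ffun 'I_k -> bool})
     (\prod_(j < k) (if b j then frac (theta j) else 1 - frac (theta j)))
     * Ucov i (fun j => (fl (theta j) + b j)%N).

Definition upd (theta : 'I_k -> RR) (i : 'I_k) (t : RR) : 'I_k -> RR :=
  fun j => if j == i then t else theta j.

Definition in_strategy_space (theta : 'I_k -> RR) : Prop :=
  forall j, 0 <= theta j.

Definition feasible (mu : 'I_k -> RR) (theta : 'I_k -> RR) : Prop :=
  forall i, mu i <= ucov i theta.

Definition stable_equilibrium (mu : 'I_k -> RR) (theta : 'I_k -> RR) : Prop :=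
  in_strategy_space theta /\ feasible mu theta /\
  forall i (t : RR), 0 <= t -> t < theta i -> ~ (mu i <= ucov i (upd theta i t)).

End RandomCoverage.

Definition convex_set (k : nat) (S : ('I_k -> RR) -> Prop) : Prop :=
  forall a b (l : RR), S a -> S b -> 0 <= l -> l <= 1 ->
    S (fun j => l * a j + (1 - l) * b j).

From Pilot Require Import Defs.
From mathcomp Require Import all_boot all_order all_algebra.
From mathcomp Require Import Rstruct.
From mathcomp Require Import ring lra.
Import Order.TTheory GRing.Theory Num.Theory.
Local Open Scope ring_scope.

(* Two agents on a one-point domain, each covering it with certainty and each
   demanding utility 1.  The expected utility is 1 - 1/2 P(no agent samples),
   so a profile is feasible iff some agent samples surely, i.e. has theta_j >= 1.
   Hence (1, 0) and (0, 1) are stable: the only agent able to lower her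
   strategy would drop below 1, leaving the point uncovered with positive
   probability.  Their midpoint (1/2, 1/2) misses the point with probability
   1/4 and is not even feasible. *)

Section ExpectedUtility.
Variables (X : finType) (k : nat) (q : 'I_k -> X -> RR).

(* E[p ^ m] for m = floor t + Bernoulli (frac t). *)
Definition expected_pow (p t : RR) : RR :=
  Defs.frac t * p ^+ (fl t).+1 + (1 - Defs.frac t) * p ^+ fl t.

(* Independence of the m_j: the expectation of the product factorizes. *)
Lemma ucovE i theta :
  ucov q i theta =
  1 - 2^-1 * \sum_(x : X) q i x * \prod_(j < k) expected_pow (1 - q j x) (theta j).
Proof.
pose w j (c : bool) := if c then Defs.frac (theta j) else 1 - Defs.frac (theta j).
have weights_sum1 : \sum_(b : {ffun 'I_k -> bool}) \prod_(j < k) w j (b j) = 1.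
  rewrite -bigA_distr_bigA /=; apply: big1 => j _.
  by rewrite big_bool /w /= addrC subrK.
rewrite /ucov /Ucov.
under eq_bigr => b _ do rewrite mulrBr mulr1 mulrCA mulr_sumr.
rewrite sumrB weights_sum1 -mulr_sumr exchange_big /=; congr (1 - 2^-1 * _).
apply: eq_bigr => x _.
under eq_bigr => b _ do rewrite mulrCA -big_split /=.
rewrite -mulr_sumr; congr (_ * _).
rewrite -(bigA_distr_bigA (fun j c => w j c * (1 - q j x) ^+ (fl (theta j) + c))).
by apply: eq_bigr => j _; rewrite big_bool /w addn1 addn0.
Qed.

End ExpectedUtility.

Lemma expected_pow0_lt1 t : t < 1 -> expected_pow 0 t = 1 - t.
Proof.
move=> t_lt1; have fl0 : fl t = 0%N by apply/truncn0Pn; rewrite -ltNge.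
by rewrite /expected_pow /Defs.frac fl0 RminusE subr0 expr0n /= mulr0 add0r mulr1.
Qed.

Lemma expected_pow0_ge1 t : 1 <= t -> expected_pow 0 t = 0.
Proof.
move=> t_ge1; have fl_gt0 : (0 < fl t)%N by rewrite truncn_gt0.
by rewrite /expected_pow !expr0n /= (gtn_eqF fl_gt0) !mulr0 addr0.
Qed.

Definition sure_cover (k : nat) : 'I_k -> unit -> RR := fun _ _ => 1.

Lemma sure_cover_distr k : is_distr (sure_cover k).
Proof. by move=> i; split=> [x|]; rewrite /sure_cover ?ler01 // big_const card_unit /= addr0. Qed.

Lemma ucov_sure_cover k i theta :
  ucov (sure_cover k) i theta = 1 - 2^-1 * \prod_(j < k) expected_pow 0 (theta j).
Proof.
rewrite ucovE /sure_cover.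
under eq_bigr do under eq_bigr do rewrite subrr.
by rewrite big_const card_unit /= addr0 mul1r.
Qed.

Lemma ucov_sure_cover_ge1P k i theta :
  reflect (exists j, 1 <= theta j) (1 <= ucov (sure_cover k) i theta).
Proof.
rewrite ucov_sure_cover; apply: (iffP idP) => [u_ge1 | [j theta_ge1]].
- apply/existsP; apply: contraLR u_ge1 => /existsPn theta_lt1.
  suff : 0 < \prod_(j < k) expected_pow 0 (theta j) by rewrite -ltNge; lra.
  apply: prodr_gt0 => j _; have := theta_lt1 j; rewrite -ltNge => lt1.
  by rewrite expected_pow0_lt1 // subr_gt0.
- by rewrite (bigD1 j) //= expected_pow0_ge1 // mul0r mulr0 subr0.
Qed.

Definition basis_vec {k : nat} (i : 'I_k) : 'I_k -> RR := fun j => (j == i)%:R.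

Lemma basis_vec_stable {k : nat} (i : 'I_k) :
  stable_equilibrium (sure_cover k) (fun _ => 1) (basis_vec i).
Proof.
split; [|split].
- by move=> j; rewrite /basis_vec ler0n.
- by move=> i'; apply/ucov_sure_cover_ge1P; exists i; rewrite /basis_vec eqxx.
- move=> i' t t_ge0 t_lt /ucov_sure_cover_ge1P [j].
  rewrite /basis_vec in t_lt; have {t_lt} [-> t_lt1] : i' = i /\ t < 1.
    by case: eqP t_lt => [-> | _ /=] t_lt; [|lra].
  by rewrite /upd /basis_vec; case: ifP => [_ | ->] /=; lra.
Qed.

Theorem theorem8 :
  exists (X : finType) (k : nat) (q : 'I_k -> X -> RR) (mu : 'I_k -> RR),
    is_distr q /\ (forall i, 0 <= mu i <= 1) /\
    ~ convex_set (stable_equilibrium q mu).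
Proof.
exists unit, 2%N, (sure_cover 2), (fun _ => 1).
split; first exact: sure_cover_distr.
split; first by move=> _; rewrite lexx ler01.
move=> convex.
have half_ge0 : 0 <= 2^-1 :> RR by lra.
have half_le1 : 2^-1 <= 1 :> RR by lra.
have [_ [midpoint_feasible _]] := convex _ _ _
  (basis_vec_stable ord0) (basis_vec_stable ord_max) half_ge0 half_le1.
have /ucov_sure_cover_ge1P [j] := midpoint_feasible ord0.
rewrite /basis_vec; have [->|_] := eqVneq j ord0.
  by rewrite (_ : (ord0 == ord_max :> 'I_2) = false) //=; lra.
by case: (j == ord_max) => /=; lra.
Qed.
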